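(* Let $(W_n)$ be a standard numbering of the c.e. subsets of $\omega$, $V_n=\{(i,j)\mid\langle i,j\rangle\in W_n\}$ for a computable pairing bijection $\langle\cdot,\cdot\rangle$, and let $t$ be a computable function such that $V_{t(n)}$ is the transitive closure of $V_n$ for every $n$. Then the set $\{n\in\omega\mid V_{t(n)}\text{ is interpolable}\}$ is $\Pi^0_2$-complete; that is, deciding whether a given c.e. transitive relation on $\omega$ is interpolable is $\Pi^0_2$-complete.
   Context: A transitive relation $\prec$ on $\omega$ is interpolable if for every $y$ the initial segment $\{x\mid x\prec y\}$ is directed, i.e. non-empty and such that any two of its elements have a $\prec$-upper bound in it. *)

From Stdlib Require Import List Arith Relations.
Import ListNotations.

(* ---------- mu-recursive programs (arguments are lists of naturals;
   missing arguments default to 0) ---------- *)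
Inductive prog : Type :=
| Zero : prog
| Succ : prog
| Proj : nat -> prog
| Comp : prog -> list prog -> prog
| Prim : prog -> prog -> prog
| Mu   : prog -> prog.

Fixpoint eval (k : nat) (p : prog) (args : list nat) {struct k} : option nat :=
  match k with
  | 0 => None
  | S k' =>
    match p with
    | Zero => Some 0
    | Succ => Some (S (hd 0 args))
    | Proj i => Some (nth i args 0)
    | Comp f gs =>
        let fix evl (l : list prog) : option (list nat) :=
          match l with
          | nil => Some nil
          | g :: l' =>
              match eval k' g args, evl l' with
              | Some v, Some vs => Some (v :: vs)
              | _, _ => None
              end
          end in
        match evl gs with
        | Some vs => eval k' f vs
        | None => None
        end
    | Prim f g =>
        let xs := tl args in
        match hd 0 args with
        | 0 => eval k' f xs
        | S m =>
            match eval k' (Prim f g) (m :: xs) with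
            | Some r => eval k' g (m :: r :: xs)
            | None => None
            end
        end
    | Mu f =>
        let fix search (c y : nat) : option nat :=
          match c with
          | 0 => None
          | S c' =>
              match eval k' f (y :: args) with
              | Some 0 => Some y
              | Some _ => search c' (S y)
              | None => None
              end
          end in
        search k' 0
    end
  end.

Definition converges (p : prog) (args : list nat) (v : nat) : Prop :=
  exists k, eval k p args = Some v.

Definition pair (i j : nat) : nat := (i + j) * (i + j + 1) / 2 + j.

Fixpoint unpair (z : nat) : nat * nat :=
  match z with
  | 0 => (0, 0)
  | S z' => let (i, j) := unpair z' in
            match i with
            | 0 => (S j, 0)
            | S i' => (i', S j)
            end
  end.

(* ---------- Goedel numbering of programs (surjective decoding) ---------- *)
Fixpoint dec (fuel n : nat) {struct fuel} : prog :=
  match fuel with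
  | 0 => Zero
  | S f =>
    let q := n / 6 in
    match n mod 6 with
    | 0 => Zero
    | 1 => Succ
    | 2 => Proj q
    | 3 => Comp (dec f (fst (unpair q))) (dec_list f (snd (unpair q)))
    | 4 => Prim (dec f (fst (unpair q))) (dec f (snd (unpair q)))
    | _ => Mu (dec f q)
    end
  end
with dec_list (fuel m : nat) {struct fuel} : list prog :=
  match fuel with
  | 0 => nil
  | S f =>
    match m with
    | 0 => nil
    | S m' => dec f (fst (unpair m')) :: dec_list f (snd (unpair m'))
    end
  end.

Definition decode (n : nat) : prog := dec (S n) n.

Definition W (n x : nat) : Prop := exists v, converges (decode n) [x] v.

Definition V (n i j : nat) : Prop := W n (pair i j).

Definition computable_fun (f : nat -> nat) : Prop :=
  exists p : prog, forall x, converges p [x] (f x).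

Definition computable_rel3 (R : nat -> nat -> nat -> Prop) : Prop :=
  exists p : prog, forall n x y,
    (R n x y -> converges p [n; x; y] 0) /\
    (~ R n x y -> converges p [n; x; y] 1).

Definition Pi02 (A : nat -> Prop) : Prop :=
  exists R, computable_rel3 R /\
    forall n, A n <-> (forall x, exists y, R n x y).

Definition many_one_reducible (B A : nat -> Prop) : Prop :=
  exists f, computable_fun f /\ forall n, B n <-> A (f n).

Definition Pi02_complete (A : nat -> Prop) : Prop :=
  Pi02 A /\ forall B, Pi02 B -> many_one_reducible B A.

Definition directed_below (R : nat -> nat -> Prop) (y : nat) : Prop :=
  (exists x, R x y) /\
  (forall a b, R a y -> R b y -> exists c, R c y /\ R a c /\ R b c).

Definition interpolable (R : nat -> nat -> Prop) : Prop :=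
  transitive nat R /\ forall y, directed_below R y.

(* Upper bound: V_(t n) is transitive, and once V_m i j is written as
   "exists u, T m <i,j> u = 0" with a total recursive T (Kleene's normal form), the
   directedness of all initial segments becomes "forall X, exists Y, (decidable)".
   T m z u checks that u codes a certificate: a finite list of evaluation facts
   (program, arguments, value), each justified by other facts of the list according to
   the rule of its program constructor, and containing a fact for program m on [z].

   Hardness: if B n <-> forall x, exists y, R n x y with R decidable, let odd numbers
   be reflexive points and put 1 below 2x iff exists y, R n x y. This c.e. relation is
   transitive, has an index computable from n, and is interpolable iff B n. *)

From Stdlib Require Import List Arith Lia Relations ClassicalDescription.
Import ListNotations.

(** * Big-step semantics of programs *)

(* The local fixpoints that [eval] uses for the arguments of [Comp] and for the search
   of [Mu], made global. *)
Fixpoint eval_list (k : nat) (gs : list prog) (a : list nat) : option (list nat) :=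
  match gs with
  | nil => Some nil
  | g :: gs' =>
      match eval k g a, eval_list k gs' a with
      | Some v, Some vs => Some (v :: vs)
      | _, _ => None
      end
  end.

Fixpoint eval_search (k : nat) (f : prog) (a : list nat) (c y : nat) : option nat :=
  match c with
  | 0 => None
  | S c' =>
      match eval k f (y :: a) with
      | Some 0 => Some y
      | Some _ => eval_search k f a c' (S y)
      | None => None
      end
  end.

Lemma eval_Comp k f gs a :
  eval (S k) (Comp f gs) a =
  match eval_list k gs a with Some vs => eval k f vs | None => None end.
Proof.
  simpl.
  match goal with |- match ?F gs with _ => _ end = _ =>
    assert (E : forall l, F l = eval_list k l a) end.
  { induction l as [|g l IH]; simpl; [reflexivity | now rewrite IH]. }
  now rewrite E.
Qed.

Lemma eval_Prim k f g a :
  eval (S k) (Prim f g) a =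
  match hd 0 a with
  | 0 => eval k f (tl a)
  | S m =>
      match eval k (Prim f g) (m :: tl a) with
      | Some r => eval k g (m :: r :: tl a)
      | None => None
      end
  end.
Proof. reflexivity. Qed.

Lemma eval_Mu k f a : eval (S k) (Mu f) a = eval_search k f a k 0.
Proof.
  simpl.
  match goal with |- ?F k 0 = _ =>
    assert (E : forall c y, F c y = eval_search k f a c y) end.
  { induction c as [|c IH]; intros y; simpl; [reflexivity|].
    destruct (eval k f (y :: a)) as [[|n]|]; auto. }
  apply E.
Qed.

Lemma eval_search_S k f a c y :
  eval_search k f a (S c) y =
  match eval k f (y :: a) with
  | Some 0 => Some y
  | Some _ => eval_search k f a c (S y)
  | None => None
  end.
Proof. reflexivity. Qed.

Lemma eval_succ k p a v : eval k p a = Some v -> eval (S k) p a = Some v.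
Proof.
  revert p a v; induction k as [|k IHk]; intros p a v H; [discriminate|].
  destruct p as [| | |f gs|f g|f]; try exact H.
  - rewrite eval_Comp in *.
    assert (HL : forall gs vs, eval_list k gs a = Some vs -> eval_list (S k) gs a = Some vs).
    { induction gs0 as [|g gs0 IH]; intros vs E; simpl in *; [exact E|].
      destruct (eval k g a) eqn:E1; [|discriminate].
      destruct (eval_list k gs0 a) eqn:E2; [|discriminate].
      now rewrite (IHk _ _ _ E1), (IH _ eq_refl). }
    destruct (eval_list k gs a) eqn:E; [|discriminate].
    rewrite (HL _ _ E). now apply IHk.
  - rewrite eval_Prim in *. destruct (hd 0 a); [now apply IHk|].
    destruct (eval k (Prim f g) (n :: tl a)) eqn:E; [|discriminate].
    rewrite (IHk _ _ _ E). now apply IHk.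
  - rewrite eval_Mu in *.
    assert (HS : forall c y, eval_search k f a c y = Some v ->
                             eval_search (S k) f a (S c) y = Some v).
    { induction c as [|c IH]; intros y E; simpl in E; [discriminate|].
      rewrite eval_search_S. destruct (eval k f (y :: a)) eqn:E1; [|discriminate].
      rewrite (IHk _ _ _ E1). destruct n; [exact E|]. now apply IH. }
    now apply HS.
Qed.

Lemma eval_mono k k' p a v : k <= k' -> eval k p a = Some v -> eval k' p a = Some v.
Proof. induction 1; auto using eval_succ. Qed.

Lemma eval_list_mono k k' gs a vs :
  k <= k' -> eval_list k gs a = Some vs -> eval_list k' gs a = Some vs.
Proof.
  intros Hk; revert vs; induction gs as [|g gs IH]; intros vs E; simpl in *; [exact E|].
  destruct (eval k g a) eqn:E1; [|discriminate].
  destruct (eval_list k gs a) eqn:E2; [|discriminate].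
  now rewrite (eval_mono _ _ _ _ _ Hk E1), (IH _ eq_refl).
Qed.

Inductive evals : prog -> list nat -> nat -> Prop :=
| evals_Zero a : evals Zero a 0
| evals_Succ a : evals Succ a (S (hd 0 a))
| evals_Proj i a : evals (Proj i) a (nth i a 0)
| evals_Comp f gs a vs v : evals_list gs a vs -> evals f vs v -> evals (Comp f gs) a v
| evals_Prim0 f g a v : hd 0 a = 0 -> evals f (tl a) v -> evals (Prim f g) a v
| evals_PrimS f g a m r v : hd 0 a = S m -> evals (Prim f g) (m :: tl a) r ->
    evals g (m :: r :: tl a) v -> evals (Prim f g) a v
| evals_Mu f a v : evals_search f a 0 v -> evals (Mu f) a v
with evals_list : list prog -> list nat -> list nat -> Prop :=
| evals_nil a : evals_list nil a nil
| evals_cons g gs a v vs : evals g a v -> evals_list gs a vs -> evals_list (g :: gs) a (v :: vs)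
with evals_search : prog -> list nat -> nat -> nat -> Prop :=
| search_found f a y : evals f (y :: a) 0 -> evals_search f a y y
| search_next f a y w v : evals f (y :: a) (S w) -> evals_search f a (S y) v ->
    evals_search f a y v.

Scheme evals_ind' := Induction for evals Sort Prop
with evals_list_ind' := Induction for evals_list Sort Prop
with evals_search_ind' := Induction for evals_search Sort Prop.
Combined Scheme evals_mutind from evals_ind', evals_list_ind', evals_search_ind'.

Lemma eval_evals k p a v : eval k p a = Some v -> evals p a v.
Proof.
  revert p a v; induction k as [|k IHk]; intros p a v H; [discriminate|].
  destruct p as [| | |f gs|f g|f].
  - injection H as <-. constructor.
  - injection H as <-. constructor.
  - injection H as <-. constructor.
  - rewrite eval_Comp in H.
    assert (HL : forall gs vs, eval_list k gs a = Some vs -> evals_list gs a vs).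
    { induction gs0 as [|g gs0 IH]; intros vs E; simpl in *.
      - injection E as <-. constructor.
      - destruct (eval k g a) eqn:E1; [|discriminate].
        destruct (eval_list k gs0 a) eqn:E2; [|discriminate].
        injection E as <-. constructor; auto. }
    destruct (eval_list k gs a) eqn:E; [|discriminate].
    econstructor; eauto.
  - rewrite eval_Prim in H. destruct (hd 0 a) eqn:Eh; [now apply evals_Prim0, IHk|].
    destruct (eval k (Prim f g) (n :: tl a)) eqn:E; [|discriminate].
    eapply evals_PrimS; eauto.
  - rewrite eval_Mu in H. constructor.
    assert (HS : forall c y, eval_search k f a c y = Some v -> evals_search f a y v).
    { induction c as [|c IH]; intros y E; simpl in E; [discriminate|].
      destruct (eval k f (y :: a)) as [[|n]|] eqn:E1; [|eapply search_next; eauto|discriminate].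
      injection E as <-. constructor; auto. }
    eauto.
Qed.

Lemma evals_eval_mut :
  (forall p a v, evals p a v -> exists k, eval k p a = Some v) /\
  (forall gs a vs, evals_list gs a vs -> exists k, eval_list k gs a = Some vs) /\
  (forall f a y v, evals_search f a y v -> y <= v /\
     exists k, forall k' c, k <= k' -> v - y < c -> eval_search k' f a c y = Some v).
Proof.
  apply evals_mutind.
  - intros a. now exists 1.
  - intros a. now exists 1.
  - intros i a. now exists 1.
  - intros f gs a vs v _ [k1 H1] _ [k2 H2]. exists (S (max k1 k2)). rewrite eval_Comp.
    rewrite (eval_list_mono k1 (max k1 k2) gs a vs); [|lia|exact H1].
    eapply eval_mono; [|exact H2]. lia.
  - intros f g a v Eh _ [k H]. exists (S k). now rewrite eval_Prim, Eh.
  - intros f g a m r v Eh _ [k1 H1] _ [k2 H2]. exists (S (max k1 k2)).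
    rewrite eval_Prim, Eh, (eval_mono k1 (max k1 k2) _ _ _ ltac:(lia) H1).
    eapply eval_mono; [|exact H2]. lia.
  - intros f a v _ [_ [k H]]. exists (S (max k (S v))). rewrite eval_Mu. apply H; lia.
  - intros a. now exists 1.
  - intros g gs a v vs _ [k1 H1] _ [k2 H2]. exists (max k1 k2). simpl.
    rewrite (eval_mono k1 (max k1 k2) _ _ _ ltac:(lia) H1).
    now rewrite (eval_list_mono k2 (max k1 k2) gs a vs); [|lia|].
  - intros f a y _ [k H]. split; [lia|]. exists k. intros k' c Hk Hc.
    destruct c as [|c]; [lia|]. rewrite eval_search_S. now rewrite (eval_mono k k' _ _ _ Hk H).
  - intros f a y w v _ [k1 H1] _ [Hle [k2 H2]]. split; [lia|].
    exists (max k1 k2). intros k' c Hk Hc. destruct c as [|c]; [lia|].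
    rewrite eval_search_S, (eval_mono k1 k' _ _ _ ltac:(lia) H1). apply H2; lia.
Qed.

Lemma evals_iff_converges p a v : evals p a v <-> converges p a v.
Proof.
  split.
  - apply evals_eval_mut.
  - intros [k H]. eapply eval_evals; eauto.
Qed.

Lemma evals_det p a v w : evals p a v -> evals p a w -> v = w.
Proof.
  intros [k1 H1]%evals_iff_converges [k2 H2]%evals_iff_converges.
  apply (eval_mono k1 (max k1 k2)) in H1; [|lia].
  apply (eval_mono k2 (max k1 k2)) in H2; [|lia].
  congruence.
Qed.

(** * Total recursive functions *)

Definition recursive (f : list nat -> nat) : Prop := exists p, forall a, evals p a (f a).

Definition recursive1 (f : nat -> nat) := recursive (fun a => f (nth 0 a 0)).
Definition recursive2 (f : nat -> nat -> nat) :=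
  recursive (fun a => f (nth 0 a 0) (nth 1 a 0)).
Definition recursive3 (f : nat -> nat -> nat -> nat) :=
  recursive (fun a => f (nth 0 a 0) (nth 1 a 0) (nth 2 a 0)).
Definition recursive4 (f : nat -> nat -> nat -> nat -> nat) :=
  recursive (fun a => f (nth 0 a 0) (nth 1 a 0) (nth 2 a 0) (nth 3 a 0)).
Definition recursive5 (f : nat -> nat -> nat -> nat -> nat -> nat) :=
  recursive (fun a => f (nth 0 a 0) (nth 1 a 0) (nth 2 a 0) (nth 3 a 0) (nth 4 a 0)).

Lemma recursive_ext f g : (forall a, f a = g a) -> recursive f -> recursive g.
Proof. intros E [p H]. exists p. intros a. rewrite <- E. apply H. Qed.

Lemma recursive_proj i : recursive (fun a => nth i a 0).
Proof. exists (Proj i). constructor. Qed.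

Lemma recursive_succ : recursive1 S.
Proof. exists Succ. intros [|x a]; apply evals_Succ. Qed.

Lemma recursive_comp f gs :
  recursive f -> Forall recursive gs -> recursive (fun a => f (map (fun g => g a) gs)).
Proof.
  intros [pf Hf] Hgs.
  assert (HL : exists ps, forall a, evals_list ps a (map (fun g => g a) gs)).
  { induction Hgs as [|g gs [pg Hg] _ [ps Hps]].
    - exists nil. constructor.
    - exists (pg :: ps). constructor; auto. }
  destruct HL as [ps Hps]. exists (Comp pf ps). econstructor; eauto.
Qed.

Lemma recursive_comp1 f g : recursive1 f -> recursive g -> recursive (fun a => f (g a)).
Proof. intros Hf Hg. exact (recursive_comp _ [g] Hf ltac:(repeat constructor; auto)). Qed.

Lemma recursive_comp2 f g h :
  recursive2 f -> recursive g -> recursive h -> recursive (fun a => f (g a) (h a)).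
Proof. intros Hf Hg Hh. exact (recursive_comp _ [g; h] Hf ltac:(repeat constructor; auto)). Qed.

Lemma recursive_comp3 f g h k : recursive3 f -> recursive g -> recursive h -> recursive k ->
  recursive (fun a => f (g a) (h a) (k a)).
Proof.
  intros Hf Hg Hh Hk. exact (recursive_comp _ [g; h; k] Hf ltac:(repeat constructor; auto)).
Qed.

Lemma recursive_comp4 f g h k l :
  recursive4 f -> recursive g -> recursive h -> recursive k -> recursive l ->
  recursive (fun a => f (g a) (h a) (k a) (l a)).
Proof.
  intros Hf Hg Hh Hk Hl.
  exact (recursive_comp _ [g; h; k; l] Hf ltac:(repeat constructor; auto)).
Qed.

Lemma recursive_comp5 f g h k l m :
  recursive5 f -> recursive g -> recursive h -> recursive k -> recursive l -> recursive m ->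
  recursive (fun a => f (g a) (h a) (k a) (l a) (m a)).
Proof.
  intros Hf Hg Hh Hk Hl Hm.
  exact (recursive_comp _ [g; h; k; l; m] Hf ltac:(repeat constructor; auto)).
Qed.

Lemma recursive_const c : recursive (fun _ => c).
Proof.
  induction c as [|c IH]; [exists Zero; constructor|].
  exact (recursive_comp1 S _ recursive_succ IH).
Qed.

Fixpoint prim_rec (f g : list nat -> nat) (m : nat) (xs : list nat) : nat :=
  match m with 0 => f xs | S m' => g (m' :: prim_rec f g m' xs :: xs) end.

Lemma recursive_prim f g :
  recursive f -> recursive g -> recursive (fun a => prim_rec f g (hd 0 a) (tl a)).
Proof.
  intros [pf Hf] [pg Hg]. exists (Prim pf pg).
  enough (H : forall m a, hd 0 a = m -> evals (Prim pf pg) a (prim_rec f g m (tl a)))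
    by (intros a; now apply H).
  induction m as [|m IH]; intros a E.
  - now apply evals_Prim0.
  - eapply evals_PrimS; [exact E | now apply (IH (m :: tl a)) | apply Hg].
Qed.

Lemma evals_search_intro f a y v : y <= v -> evals f (v :: a) 0 ->
  (forall y', y <= y' < v -> exists w, evals f (y' :: a) (S w)) -> evals_search f a y v.
Proof.
  intros Hyv Hv Hlt. remember (v - y) as d eqn:Ed. revert y Hyv Hlt Ed.
  induction d as [|d IH]; intros y Hyv Hlt Ed.
  - replace y with v by lia. now constructor.
  - destruct (Hlt y) as [w Hw]; [lia|].
    eapply search_next; [exact Hw|]. apply IH; intros; try apply Hlt; lia.
Qed.

Lemma evals_search_total f (h : list nat -> nat) a y v :
  (forall b, evals f b (h b)) -> y <= v -> h (v :: a) = 0 ->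
  (forall y', y <= y' < v -> h (y' :: a) <> 0) -> evals_search f a y v.
Proof.
  intros Hh Hyv Hv Hlt. apply evals_search_intro; [exact Hyv | rewrite <- Hv; apply Hh|].
  intros y' Hy'. destruct (h (y' :: a)) as [|w] eqn:E; [now destruct (Hlt y')|].
  exists w. rewrite <- E. apply Hh.
Qed.

Lemma recursive_mu f F : recursive f ->
  (forall a, f (F a :: a) = 0 /\ forall y, y < F a -> f (y :: a) <> 0) -> recursive F.
Proof.
  intros [pf Hf] HF. exists (Mu pf). intros a. constructor.
  destruct (HF a) as [H0 H1].
  apply (evals_search_total pf f); auto; [lia|]. intros y' Hy'. apply H1; lia.
Qed.

Create HintDb recursive.
#[export] Hint Resolve recursive_succ : recursive.

(* Proves [recursive (fun a => e)] for an expression [e] built from constants,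
   argument projections and functions registered in the hint database. *)
Ltac recursive_tac :=
  lazymatch goal with
  | |- recursive1 _ => unfold recursive1; cbv beta; recursive_tac
  | |- recursive2 _ => unfold recursive2; cbv beta; recursive_tac
  | |- recursive3 _ => unfold recursive3; cbv beta; recursive_tac
  | |- recursive4 _ => unfold recursive4; cbv beta; recursive_tac
  | |- recursive5 _ => unfold recursive5; cbv beta; recursive_tac
  | |- recursive _ =>
      first
        [ apply recursive_const
        | apply recursive_proj
        | eapply recursive_comp5; [solve [eauto with recursive] | recursive_tac .. ]
        | eapply recursive_comp4; [solve [eauto with recursive] | recursive_tac .. ]
        | eapply recursive_comp3; [solve [eauto with recursive] | recursive_tac .. ]
        | eapply recursive_comp2; [solve [eauto with recursive] | recursive_tac .. ]
        | eapply recursive_comp1; [solve [eauto with recursive] | recursive_tac ] ]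
  end.

Lemma recursive_add : recursive2 Nat.add.
Proof.
  eapply recursive_ext;
    [|apply (recursive_prim (fun xs => nth 0 xs 0) (fun a => S (nth 1 a 0))); recursive_tac].
  intros [|m xs]; simpl; [reflexivity|]. induction m; simpl; auto.
Qed.
#[export] Hint Resolve recursive_add : recursive.

Lemma recursive_mul : recursive2 Nat.mul.
Proof.
  eapply recursive_ext;
    [|apply (recursive_prim (fun _ => 0) (fun a => nth 1 a 0 + nth 2 a 0)); recursive_tac].
  intros [|m xs]; simpl; [reflexivity|]. induction m; simpl; lia.
Qed.
#[export] Hint Resolve recursive_mul : recursive.

Lemma recursive_pred : recursive1 Nat.pred.
Proof.
  eapply recursive_ext; [|apply (recursive_prim (fun _ => 0) (fun a => nth 0 a 0)); recursive_tac].
  now intros [|[|m] a].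
Qed.
#[export] Hint Resolve recursive_pred : recursive.

(* [prim_rec] recurses on the first argument, hence the swap. *)
Lemma recursive_sub : recursive2 Nat.sub.
Proof.
  assert (H : recursive (fun a => prim_rec (fun xs => nth 0 xs 0)
                                          (fun b => Nat.pred (nth 1 b 0)) (hd 0 a) (tl a)))
    by (apply recursive_prim; recursive_tac).
  pose proof (recursive_comp _ [fun a => nth 1 a 0; fun a => nth 0 a 0] H
                ltac:(repeat constructor; apply recursive_proj)) as H'.
  eapply recursive_ext; [|exact H'].
  intros a. cbn. generalize (nth 0 a 0) (nth 1 a 0). intros x y.
  induction y as [|y IH]; simpl; [lia|]. rewrite IH. lia.
Qed.
#[export] Hint Resolve recursive_sub : recursive.

Definition ifz (c x y : nat) : nat := match c with 0 => x | S _ => y end.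

Lemma recursive_ifz : recursive3 ifz.
Proof.
  eapply recursive_ext;
    [|apply (recursive_prim (fun xs => nth 0 xs 0) (fun a => nth 3 a 0)); recursive_tac].
  now intros [|[|m] a].
Qed.
#[export] Hint Resolve recursive_ifz : recursive.

(* The factor [d] makes the search stop at once when [d = 0], matching [n / 0 = 0]. *)
Lemma recursive_div : recursive2 Nat.div.
Proof.
  apply (recursive_mu (fun a => (S (nth 1 a 0) - nth 2 a 0 * S (nth 0 a 0)) * nth 2 a 0));
    [recursive_tac|].
  intros a; cbn [nth]. set (n := nth 0 a 0); set (d := nth 1 a 0).
  destruct d as [|d']; [simpl; split; [lia | intros; lia]|].
  split.
  - pose proof (Nat.mul_succ_div_gt n (S d') ltac:(lia)). nia.
  - intros y Hy. pose proof (Nat.Div0.mul_div_le n (S d')).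
    assert (S d' * S y <= S d' * (n / S d')) by (apply Nat.mul_le_mono_l; lia). nia.
Qed.
#[export] Hint Resolve recursive_div : recursive.

Lemma recursive_mod : recursive2 Nat.modulo.
Proof.
  eapply recursive_ext; [intros a; symmetry; apply Nat.Div0.mod_eq|]. recursive_tac.
Qed.
#[export] Hint Resolve recursive_mod : recursive.

(** * Cantor pairing and coding of lists *)

Definition triangle s := s * (s + 1) / 2.

Lemma pair_triangle i j : pair i j = triangle (i + j) + j.
Proof. reflexivity. Qed.

Lemma triangle_S s : triangle (S s) = triangle s + S s.
Proof.
  unfold triangle. replace (S s * (S s + 1)) with (s * (s + 1) + S s * 2) by lia.
  rewrite Nat.div_add; lia.
Qed.

Lemma triangle_mono s s' : s <= s' -> triangle s <= triangle s'.
Proof. induction 1; [lia|]. rewrite triangle_S. lia. Qed.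

Lemma le_triangle s : s <= triangle s.
Proof. induction s; [cbv; lia|]. rewrite triangle_S. lia. Qed.

Lemma pair_bounds i j : triangle (i + j) <= pair i j < triangle (S (i + j)).
Proof. rewrite pair_triangle, triangle_S. lia. Qed.

Definition unpair1 z := fst (unpair z).
Definition unpair2 z := snd (unpair z).

Lemma pair_unpair z : pair (unpair1 z) (unpair2 z) = z.
Proof.
  unfold unpair1, unpair2. induction z as [|z IH]; [reflexivity|].
  simpl. destruct (unpair z) as [[|i] j].
  - simpl in *. rewrite pair_triangle in *. rewrite !Nat.add_0_r, triangle_S. simpl in IH. lia.
  - simpl in *. rewrite pair_triangle in *. replace (i + S j) with (S i + j) by lia. lia.
Qed.

Lemma pair_inj i j i' j' : pair i j = pair i' j' -> i = i' /\ j = j'.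
Proof.
  intros E.
  assert (Hs : i + j = i' + j').
  { pose proof (pair_bounds i j). pose proof (pair_bounds i' j').
    destruct (Nat.lt_trichotomy (i + j) (i' + j')) as [L|[L|L]]; auto.
    - pose proof (triangle_mono (S (i + j)) (i' + j') L). lia.
    - pose proof (triangle_mono (S (i' + j')) (i + j) L). lia. }
  rewrite !pair_triangle, Hs in E. lia.
Qed.

Lemma unpair_pair i j : unpair (pair i j) = (i, j).
Proof.
  pose proof (pair_unpair (pair i j)) as E. unfold unpair1, unpair2 in E.
  destruct (unpair (pair i j)) as [a b]. simpl in E.
  now destruct (pair_inj _ _ _ _ E) as [-> ->].
Qed.

Lemma unpair1_pair i j : unpair1 (pair i j) = i.
Proof. unfold unpair1. now rewrite unpair_pair. Qed.

Lemma unpair2_pair i j : unpair2 (pair i j) = j.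
Proof. unfold unpair2. now rewrite unpair_pair. Qed.

Lemma unpair1_le z : unpair1 z <= z.
Proof.
  rewrite <- (pair_unpair z) at 2. rewrite pair_triangle.
  pose proof (le_triangle (unpair1 z + unpair2 z)). lia.
Qed.

Lemma unpair2_le z : unpair2 z <= z.
Proof. rewrite <- (pair_unpair z) at 2. rewrite pair_triangle. lia. Qed.

Lemma recursive_triangle : recursive1 triangle.
Proof. unfold triangle. recursive_tac. Qed.
#[export] Hint Resolve recursive_triangle : recursive.

Lemma recursive_pair : recursive2 pair.
Proof. unfold pair. recursive_tac. Qed.
#[export] Hint Resolve recursive_pair : recursive.

Definition unpair_sum z := unpair1 z + unpair2 z.

(* [unpair_sum z] is the largest [s] with [triangle s <= z]. *)
Lemma recursive_unpair_sum : recursive1 unpair_sum.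
Proof.
  apply (recursive_mu (fun a => S (nth 1 a 0) - triangle (S (nth 0 a 0)))); [recursive_tac|].
  intros a. cbn [nth]. set (z := nth 0 a 0). unfold unpair_sum.
  pose proof (pair_bounds (unpair1 z) (unpair2 z)) as B. rewrite pair_unpair in B.
  split; [lia|]. intros y Hy.
  pose proof (triangle_mono (S y) (unpair1 z + unpair2 z) Hy). lia.
Qed.
#[export] Hint Resolve recursive_unpair_sum : recursive.

Lemma recursive_unpair2 : recursive1 unpair2.
Proof.
  eapply recursive_ext with (f := fun a => nth 0 a 0 - triangle (unpair_sum (nth 0 a 0)));
    [|recursive_tac].
  intros a. set (z := nth 0 a 0). rewrite <- (pair_unpair z) at 1.
  rewrite pair_triangle. unfold unpair_sum. lia.
Qed.
#[export] Hint Resolve recursive_unpair2 : recursive.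

Lemma recursive_unpair1 : recursive1 unpair1.
Proof.
  eapply recursive_ext with (f := fun a => unpair_sum (nth 0 a 0) - unpair2 (nth 0 a 0));
    [|recursive_tac].
  intros a. unfold unpair_sum. lia.
Qed.
#[export] Hint Resolve recursive_unpair1 : recursive.

Fixpoint lcode (l : list nat) : nat :=
  match l with nil => 0 | x :: l' => S (pair x (lcode l')) end.

Fixpoint ldecode_fuel (fuel z : nat) : list nat :=
  match fuel, z with
  | S fuel', S w => unpair1 w :: ldecode_fuel fuel' (unpair2 w)
  | _, _ => nil
  end.

Definition ldecode z := ldecode_fuel z z.

Lemma lcode_ldecode_fuel fuel z : z <= fuel -> lcode (ldecode_fuel fuel z) = z.
Proof.
  revert z; induction fuel as [|fuel IH]; intros [|w] Hz; simpl; try reflexivity; [lia|].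
  pose proof (unpair2_le w). rewrite IH by lia. now rewrite pair_unpair.
Qed.

Lemma lcode_ldecode z : lcode (ldecode z) = z.
Proof. now apply lcode_ldecode_fuel. Qed.

Lemma lcode_inj l l' : lcode l = lcode l' -> l = l'.
Proof.
  revert l'; induction l as [|x l IH]; intros [|x' l'] E; simpl in E; try discriminate; auto.
  injection E as E. apply pair_inj in E as [-> E]. f_equal; auto.
Qed.

Lemma ldecode_lcode l : ldecode (lcode l) = l.
Proof. apply lcode_inj, lcode_ldecode. Qed.

Lemma ldecode_S w : ldecode (S w) = unpair1 w :: ldecode (unpair2 w).
Proof.
  unfold ldecode at 1. simpl. f_equal. apply lcode_inj.
  rewrite lcode_ldecode. apply lcode_ldecode_fuel, unpair2_le.
Qed.

Lemma ldecode_lt z x : In x (ldecode z) -> x < z.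
Proof.
  induction z as [z IH] using (well_founded_induction lt_wf).
  destruct z as [|w]; [simpl; tauto|]. rewrite ldecode_S. intros [<-|H].
  - pose proof (unpair1_le w). lia.
  - pose proof (unpair2_le w). apply IH in H; lia.
Qed.

Definition lcons x z := S (pair x z).
Definition lhd z := unpair1 (pred z).
Definition ltl z := unpair2 (pred z).
Definition ldrop n z := Nat.iter n ltl z.
Definition lnth i z := lhd (ldrop i z).
Definition llength z := length (ldecode z).

Lemma lcons_lcode x l : lcons x (lcode l) = lcode (x :: l).
Proof. reflexivity. Qed.

Lemma lhd_lcode l : lhd (lcode l) = hd 0 l.
Proof. destruct l; [reflexivity|]. apply unpair1_pair. Qed.

Lemma ltl_lcode l : ltl (lcode l) = lcode (tl l).
Proof. destruct l; [reflexivity|]. apply unpair2_pair. Qed.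

Lemma ldrop_lcode n l : ldrop n (lcode l) = lcode (skipn n l).
Proof.
  revert l; induction n as [|n IH]; intros l; [reflexivity|].
  change (ldrop (S n) (lcode l)) with (ltl (ldrop n (lcode l))).
  rewrite IH, ltl_lcode. f_equal. clear IH. revert l.
  induction n; intros [|x l]; simpl; auto.
Qed.

Lemma lnth_lcode i l : lnth i (lcode l) = nth i l 0.
Proof.
  unfold lnth. rewrite ldrop_lcode, lhd_lcode. revert l.
  induction i; intros [|x l]; simpl; auto.
Qed.

Lemma llength_lcode l : llength (lcode l) = length l.
Proof. unfold llength. now rewrite ldecode_lcode. Qed.

Lemma lhd_ldecode z : lhd z = hd 0 (ldecode z).
Proof. rewrite <- (lcode_ldecode z) at 1. apply lhd_lcode. Qed.

Lemma ltl_ldecode z : ldecode (ltl z) = tl (ldecode z).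
Proof. rewrite <- (lcode_ldecode z) at 1. now rewrite ltl_lcode, ldecode_lcode. Qed.

Lemma lcons_ldecode x z : ldecode (lcons x z) = x :: ldecode z.
Proof. rewrite <- (lcode_ldecode z) at 1. now rewrite lcons_lcode, ldecode_lcode. Qed.

Lemma lnth_ldecode i z : lnth i z = nth i (ldecode z) 0.
Proof. rewrite <- (lcode_ldecode z) at 1. apply lnth_lcode. Qed.

Lemma recursive_lcons : recursive2 lcons.
Proof. unfold lcons. recursive_tac. Qed.
Lemma recursive_lhd : recursive1 lhd.
Proof. unfold lhd. recursive_tac. Qed.
Lemma recursive_ltl : recursive1 ltl.
Proof. unfold ltl. recursive_tac. Qed.
#[export] Hint Resolve recursive_lcons recursive_lhd recursive_ltl : recursive.

Lemma recursive_ldrop : recursive2 ldrop.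
Proof.
  eapply recursive_ext;
    [|apply (recursive_prim (fun xs => nth 0 xs 0) (fun a => ltl (nth 1 a 0))); recursive_tac].
  intros [|m xs]; simpl; [reflexivity|]. induction m as [|m IH]; simpl; congruence.
Qed.
#[export] Hint Resolve recursive_ldrop : recursive.

Lemma recursive_lnth : recursive2 lnth.
Proof. unfold lnth. recursive_tac. Qed.
#[export] Hint Resolve recursive_lnth : recursive.

(* The length is the least [n] after which [ldrop n] reaches the empty list. *)
Lemma recursive_llength : recursive1 llength.
Proof.
  apply (recursive_mu (fun a => ldrop (nth 0 a 0) (nth 1 a 0))); [recursive_tac|].
  intros a. cbn [nth]. set (z := nth 0 a 0). unfold llength.
  rewrite <- (lcode_ldecode z), ldecode_lcode. generalize (ldecode z); intros l.
  split; [now rewrite ldrop_lcode, skipn_all|].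
  intros y Hy. rewrite ldrop_lcode. destruct (skipn y l) eqn:E; [|discriminate].
  apply (f_equal (@length nat)) in E. rewrite length_skipn in E. simpl in E. lia.
Qed.
#[export] Hint Resolve recursive_llength : recursive.

(** * Decidable predicates as zero sets *)

Definition zeq x y := (x - y) + (y - x).
Definition zlt x y := S x - y.
Definition zand x y := ifz x (ifz y 0 1) 1.
Definition zor x y := ifz x 0 (ifz y 0 1).
Definition znot x := ifz x 1 0.

Lemma zeq_spec x y : zeq x y = 0 <-> x = y.
Proof. unfold zeq; lia. Qed.
Lemma zlt_spec x y : zlt x y = 0 <-> x < y.
Proof. unfold zlt; lia. Qed.
Lemma zand_spec x y : zand x y = 0 <-> x = 0 /\ y = 0.
Proof. destruct x, y; simpl; intuition congruence. Qed.
Lemma zor_spec x y : zor x y = 0 <-> x = 0 \/ y = 0.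
Proof. destruct x, y; simpl; intuition congruence. Qed.
Lemma znot_spec x : znot x = 0 <-> x <> 0.
Proof. destruct x; simpl; intuition congruence. Qed.

Lemma zand_01 x y : zand x y = 0 \/ zand x y = 1.
Proof. destruct x, y; simpl; auto. Qed.

Lemma recursive_zeq : recursive2 zeq. Proof. unfold zeq. recursive_tac. Qed.
Lemma recursive_zlt : recursive2 zlt. Proof. unfold zlt. recursive_tac. Qed.
Lemma recursive_zand : recursive2 zand. Proof. unfold zand. recursive_tac. Qed.
Lemma recursive_zor : recursive2 zor. Proof. unfold zor. recursive_tac. Qed.
Lemma recursive_znot : recursive1 znot. Proof. unfold znot. recursive_tac. Qed.
#[export] Hint Resolve recursive_zeq recursive_zlt recursive_zand recursive_zor
  recursive_znot : recursive.

Fixpoint first_zero (P : nat -> nat) (n : nat) : nat :=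
  match n with
  | 0 => 0
  | S n' =>
      if first_zero P n' <? n' then first_zero P n'
      else if P n' =? 0 then n' else S n'
  end.

Lemma first_zero_spec P n :
  first_zero P n <= n /\ (first_zero P n < n -> P (first_zero P n) = 0) /\
  forall y, y < first_zero P n -> P y <> 0.
Proof.
  induction n as [|n [H1 [H2 H3]]]; simpl; [split; [|split]; intros; lia|].
  destruct (Nat.ltb_spec (first_zero P n) n) as [E|E].
  - split; [lia|split; auto].
  - assert (first_zero P n = n) by lia.
    destruct (Nat.eqb_spec (P n) 0) as [E2|E2]; split; try lia; split; intros; try lia;
      auto using E2.
    + apply H3; lia.
    + destruct (Nat.eq_dec y n) as [->|]; auto. apply H3; lia.
Qed.

Lemma recursive_first_zero P :
  recursive2 P -> recursive2 (fun n x => first_zero (fun i => P i x) n).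
Proof.
  intros HP.
  apply (recursive_mu (fun b => zor (zeq (nth 0 b 0) (nth 1 b 0))
                                    (P (nth 0 b 0) (nth 2 b 0)))); [recursive_tac|].
  intros a. cbn [nth].
  destruct (first_zero_spec (fun i => P i (nth 1 a 0)) (nth 0 a 0)) as [H1 [H2 H3]].
  set (m := first_zero _ _) in *. split.
  - apply zor_spec. destruct (Nat.eq_dec m (nth 0 a 0)).
    + left. now apply zeq_spec.
    + right. apply H2. lia.
  - intros y Hy. rewrite zor_spec, zeq_spec. intros [E|E]; [lia | exact (H3 y Hy E)].
Qed.

Definition zexists_below (P : nat -> nat -> nat) (n x : nat) :=
  zlt (first_zero (fun i => P i x) n) n.

Definition zforall_below (P : nat -> nat -> nat) (n x : nat) :=
  znot (zexists_below (fun i y => znot (P i y)) n x).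

Lemma zexists_below_spec P n x :
  zexists_below P n x = 0 <-> exists i, i < n /\ P i x = 0.
Proof.
  unfold zexists_below. rewrite zlt_spec.
  destruct (first_zero_spec (fun i => P i x) n) as [H1 [H2 H3]]. split.
  - intros Hlt. eauto.
  - intros [i [Hi HP]]. destruct (Nat.lt_ge_cases (first_zero (fun i => P i x) n) n); auto.
    exfalso. apply (H3 i); [lia|exact HP].
Qed.

Lemma zforall_below_spec P n x :
  zforall_below P n x = 0 <-> forall i, i < n -> P i x = 0.
Proof.
  unfold zforall_below. rewrite znot_spec, zexists_below_spec. split.
  - intros H i Hi. destruct (P i x) eqn:E; auto. exfalso. apply H.
    exists i. split; auto. apply znot_spec. congruence.
  - intros H [i [Hi E]]. rewrite znot_spec in E. exact (E (H i Hi)).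
Qed.

Lemma recursive_zexists_below P : recursive2 P -> recursive2 (zexists_below P).
Proof.
  intros HP. unfold recursive2, zexists_below.
  apply (recursive_comp2 zlt (fun a => first_zero (fun i => P i (nth 1 a 0)) (nth 0 a 0)));
    [recursive_tac | exact (recursive_first_zero P HP) | recursive_tac].
Qed.

Lemma recursive_zforall_below P : recursive2 P -> recursive2 (zforall_below P).
Proof.
  intros HP. assert (H : recursive2 (fun i y => znot (P i y))) by recursive_tac.
  pose proof (recursive_zexists_below _ H). unfold zforall_below. recursive_tac.
Qed.

#[export] Hint Extern 1 (recursive2 (zexists_below _)) =>
  apply recursive_zexists_below; recursive_tac : recursive.
#[export] Hint Extern 1 (recursive2 (zforall_below _)) =>
  apply recursive_zforall_below; recursive_tac : recursive.

Definition zexists_in (Q : nat -> nat -> nat) (D p : nat) :=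
  zexists_below (fun j x => Q (lnth j (lnth 0 x)) (lnth 1 x)) (llength D) (lcode [D; p]).

Definition zforall_in (Q : nat -> nat -> nat) (D p : nat) :=
  zforall_below (fun j x => Q (lnth j (lnth 0 x)) (lnth 1 x)) (llength D) (lcode [D; p]).

Lemma In_iff_nth_lt (D : list nat) (P : nat -> Prop) :
  (exists e, In e D /\ P e) <-> exists j, j < length D /\ P (nth j D 0).
Proof.
  split.
  - intros [e [He H]]. apply In_nth with (d := 0) in He as [j [Hj <-]]. eauto.
  - intros [j [Hj H]]. exists (nth j D 0). auto using nth_In.
Qed.

Lemma zexists_in_spec Q D p : zexists_in Q (lcode D) p = 0 <-> exists e, In e D /\ Q e p = 0.
Proof.
  unfold zexists_in. rewrite zexists_below_spec, llength_lcode, In_iff_nth_lt.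
  split; intros [j [Hj H]]; exists j; rewrite !lnth_lcode in *; cbn [nth] in *;
    rewrite ?lnth_lcode in *; auto.
Qed.

Lemma zforall_in_spec Q D p : zforall_in Q (lcode D) p = 0 <-> forall e, In e D -> Q e p = 0.
Proof.
  unfold zforall_in. rewrite zforall_below_spec, llength_lcode. split.
  - intros H e He. apply In_nth with (d := 0) in He as [j [Hj <-]].
    specialize (H j Hj). rewrite !lnth_lcode in H. cbn [nth] in H. now rewrite lnth_lcode in H.
  - intros H j Hj. rewrite !lnth_lcode. cbn [nth]. rewrite lnth_lcode. auto using nth_In.
Qed.

Lemma recursive_zexists_in Q : recursive2 Q -> recursive2 (zexists_in Q).
Proof. intros HQ. unfold zexists_in. recursive_tac. Qed.

Lemma recursive_zforall_in Q : recursive2 Q -> recursive2 (zforall_in Q).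
Proof. intros HQ. unfold zforall_in. recursive_tac. Qed.

#[export] Hint Extern 1 (recursive2 (zexists_in _)) =>
  apply recursive_zexists_in; recursive_tac : recursive.
#[export] Hint Extern 1 (recursive2 (zforall_in _)) =>
  apply recursive_zforall_in; recursive_tac : recursive.

(** * Coding of programs *)

Lemma subcodes_lt c : c mod 6 <> 0 -> c / 6 < c /\ unpair1 (c / 6) < c /\ unpair2 (c / 6) < c.
Proof.
  intros Hc. assert (c / 6 < c) by (apply Nat.div_lt; [destruct c; [easy|]|]; lia).
  pose proof (unpair1_le (c / 6)). pose proof (unpair2_le (c / 6)). lia.
Qed.

Lemma dec_fuel_succ f :
  (forall n, n < f -> dec f n = dec (S f) n) /\
  (forall m, m < f -> dec_list f m = dec_list (S f) m).
Proof.
  induction f as [|f [IH1 IH2]]; [split; intros; lia|]. split.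
  - intros n Hn. cbn [dec dec_list].
    destruct (n mod 6) as [|[|[|[|[|k]]]]] eqn:E; try reflexivity;
      destruct (subcodes_lt n ltac:(congruence)) as (Q & Q1 & Q2);
      unfold unpair1, unpair2 in *; now rewrite ?IH1, ?IH2 by lia.
  - intros [|m] Hm; [reflexivity|]. cbn [dec dec_list].
    pose proof (unpair1_le m). pose proof (unpair2_le m).
    unfold unpair1, unpair2 in *. now rewrite IH1, IH2 by lia.
Qed.

Lemma dec_decode f n : n < f -> dec f n = decode n.
Proof.
  intros H. unfold decode. induction H; [reflexivity|].
  rewrite <- IHle. symmetry. apply dec_fuel_succ. lia.
Qed.

Lemma dec_list_decode f m : m < f -> dec_list f m = map decode (ldecode m).
Proof.
  revert m; induction f as [|f IH]; intros [|m] H; try lia; [reflexivity|].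
  rewrite ldecode_S. simpl. pose proof (unpair1_le m). pose proof (unpair2_le m).
  unfold unpair1, unpair2 in *. now rewrite dec_decode, IH by lia.
Qed.

Lemma decode_unfold c :
  decode c =
  match c mod 6 with
  | 0 => Zero
  | 1 => Succ
  | 2 => Proj (c / 6)
  | 3 => Comp (decode (unpair1 (c / 6))) (map decode (ldecode (unpair2 (c / 6))))
  | 4 => Prim (decode (unpair1 (c / 6))) (decode (unpair2 (c / 6)))
  | _ => Mu (decode (c / 6))
  end.
Proof.
  unfold decode at 1. cbn [dec].
  destruct (c mod 6) as [|[|[|[|[|k]]]]] eqn:E; try reflexivity;
    destruct (subcodes_lt c ltac:(congruence)) as (Q & Q1 & Q2);
    unfold unpair1, unpair2 in *; now rewrite ?dec_list_decode, ?dec_decode by lia.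
Qed.

Lemma decode_inv c p : decode c = p ->
  match p with
  | Zero => c mod 6 = 0
  | Succ => c mod 6 = 1
  | Proj i => c mod 6 = 2 /\ c / 6 = i
  | Comp f gs => c mod 6 = 3 /\ decode (unpair1 (c / 6)) = f /\
                 map decode (ldecode (unpair2 (c / 6))) = gs
  | Prim f g => c mod 6 = 4 /\ decode (unpair1 (c / 6)) = f /\ decode (unpair2 (c / 6)) = g
  | Mu f => c mod 6 = 5 /\ decode (c / 6) = f
  end.
Proof.
  intros <-. rewrite decode_unfold.
  assert (c mod 6 < 6) by (apply Nat.mod_upper_bound; lia).
  destruct (c mod 6) as [|[|[|[|[|[|k]]]]]]; auto; lia.
Qed.

Fixpoint encode (p : prog) : nat :=
  match p with
  | Zero => 0
  | Succ => 1
  | Proj i => 6 * i + 2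
  | Comp f gs => 6 * pair (encode f) (lcode (map encode gs)) + 3
  | Prim f g => 6 * pair (encode f) (encode g) + 4
  | Mu f => 6 * encode f + 5
  end.

Fixpoint prog_size (p : prog) : nat :=
  match p with
  | Comp f gs => S (prog_size f + list_sum (map prog_size gs))
  | Prim f g => S (prog_size f + prog_size g)
  | Mu f => S (prog_size f)
  | _ => 1
  end.

Lemma mod6_div6 x k : k < 6 -> (6 * x + k) mod 6 = k /\ (6 * x + k) / 6 = x.
Proof.
  intros H. rewrite Nat.add_comm, Nat.mul_comm. split.
  - rewrite Nat.Div0.mod_add. now apply Nat.mod_small.
  - rewrite Nat.div_add by lia. now rewrite Nat.div_small.
Qed.

Lemma decode_encode p : decode (encode p) = p.
Proof.
  remember (prog_size p) as n eqn:En. assert (Hs : prog_size p <= n) by lia. clear En.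
  revert p Hs; induction n as [|n IH]; intros p Hs; [destruct p; simpl in Hs; lia|].
  destruct p as [| |i|f gs|f g|f]; cbn [encode]; rewrite decode_unfold; simpl in Hs.
  - reflexivity.
  - reflexivity.
  - now destruct (mod6_div6 i 2 ltac:(lia)) as [-> ->].
  - destruct (mod6_div6 (pair (encode f) (lcode (map encode gs))) 3 ltac:(lia)) as [-> ->].
    rewrite unpair1_pair, unpair2_pair, ldecode_lcode, IH by lia. f_equal.
    assert (Hl : list_sum (map prog_size gs) <= n) by lia. clear Hs.
    induction gs as [|g gs IHgs]; [reflexivity|]. simpl in *.
    rewrite IH, IHgs by lia. reflexivity.
  - destruct (mod6_div6 (pair (encode f) (encode g)) 4 ltac:(lia)) as [-> ->].
    now rewrite unpair1_pair, unpair2_pair, !IH by lia.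
  - destruct (mod6_div6 (encode f) 5 ltac:(lia)) as [-> ->]. now rewrite IH by lia.
Qed.

(** * Computation certificates *)

(* An entry [entry c A v X] records that program number [c] maps the coded argument
   list [A] to [v]; [X] codes the intermediate values of a composition, or the
   previous value of a primitive recursion. *)
Definition entry c A v X := lcode [c; A; v; X].
Definition entry_prog e := lnth 0 e.
Definition entry_args e := lnth 1 e.
Definition entry_val e := lnth 2 e.
Definition entry_aux e := lnth 3 e.

Lemma entry_prog_entry c A v X : entry_prog (entry c A v X) = c.
Proof. apply lnth_lcode. Qed.
Lemma entry_args_entry c A v X : entry_args (entry c A v X) = A.
Proof. apply lnth_lcode. Qed.
Lemma entry_val_entry c A v X : entry_val (entry c A v X) = v.
Proof. apply lnth_lcode. Qed.
Lemma entry_aux_entry c A v X : entry_aux (entry c A v X) = X.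
Proof. apply lnth_lcode. Qed.

Definition derives (D : list nat) c A v :=
  exists e, In e D /\ entry_prog e = c /\ entry_args e = A /\ entry_val e = v.

Definition derives_nonzero (D : list nat) c A :=
  exists e, In e D /\ entry_prog e = c /\ entry_args e = A /\ entry_val e <> 0.

Definition justified (D : list nat) (c A v X : nat) : Prop :=
  match c mod 6 with
  | 0 => v = 0
  | 1 => v = S (lhd A)
  | 2 => v = lnth (c / 6) A
  | 3 => llength X = llength (unpair2 (c / 6)) /\
         (forall i, i < llength X -> derives D (lnth i (unpair2 (c / 6))) A (lnth i X)) /\
         derives D (unpair1 (c / 6)) X v
  | 4 => match lhd A with
         | 0 => derives D (unpair1 (c / 6)) (ltl A) v
         | S m => derives D c (lcons m (ltl A)) X /\
                  derives D (unpair2 (c / 6)) (lcons m (lcons X (ltl A))) v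
         end
  | _ => derives D (c / 6) (lcons v A) 0 /\
         forall y, y < v -> derives_nonzero D (c / 6) (lcons y A)
  end.

Definition valid_cert (D : list nat) :=
  forall e, In e D -> justified D (entry_prog e) (entry_args e) (entry_val e) (entry_aux e).

Lemma derives_incl D D' c A v : incl D D' -> derives D c A v -> derives D' c A v.
Proof. intros I [e [He H]]. exists e. auto. Qed.

Lemma derives_nonzero_incl D D' c A :
  incl D D' -> derives_nonzero D c A -> derives_nonzero D' c A.
Proof. intros I [e [He H]]. exists e. auto. Qed.

Lemma derives_app_l D1 D2 c A v : derives D1 c A v -> derives (D1 ++ D2) c A v.
Proof. apply derives_incl, incl_appl, incl_refl. Qed.

Lemma derives_app_r D1 D2 c A v : derives D2 c A v -> derives (D1 ++ D2) c A v.
Proof. apply derives_incl, incl_appr, incl_refl. Qed.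

Lemma justified_incl D D' c A v X : incl D D' -> justified D c A v X -> justified D' c A v X.
Proof.
  intros I. unfold justified.
  destruct (c mod 6) as [|[|[|[|[|k]]]]]; auto.
  - intros [H1 [H2 H3]]. eauto 6 using derives_incl.
  - destruct (lhd A); [|intros []]; eauto using derives_incl.
  - intros [H1 H2]. eauto using derives_incl, derives_nonzero_incl.
Qed.

Lemma valid_cert_nil : valid_cert [].
Proof. intros ? []. Qed.

Lemma valid_cert_app D1 D2 : valid_cert D1 -> valid_cert D2 -> valid_cert (D1 ++ D2).
Proof.
  intros H1 H2 e [He|He]%in_app_or;
    [eapply justified_incl, H1 | eapply justified_incl, H2];
    auto using incl_appl, incl_appr, incl_refl.
Qed.

Lemma evals_list_nth a cs vs : length cs = length vs ->
  (forall i, i < length cs -> evals (decode (nth i cs 0)) a (nth i vs 0)) ->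
  evals_list (map decode cs) a vs.
Proof.
  revert vs; induction cs as [|c cs IH]; intros [|v vs] E H; simpl in *; try discriminate.
  - constructor.
  - constructor; [apply (H 0); lia|]. apply IH; [lia|]. intros i Hi. apply (H (S i)); lia.
Qed.

Section Soundness.
Variable D : list nat.
Hypothesis HD : valid_cert D.

Definition sound_below c :=
  forall c' A v, c' < c -> derives D c' A v -> evals (decode c') (ldecode A) v.

(* Primitive recursion refers back to the same program, so the induction is on the
   program code first and on the recursion counter [lhd A] second. *)
Lemma justified_sound c A v X : sound_below c ->
  (forall A' v', lhd A' < lhd A -> derives D c A' v' -> evals (decode c) (ldecode A') v') ->
  justified D c A v X -> evals (decode c) (ldecode A) v.
Proof.
  intros IHc IHh J. unfold justified in J. pose proof (decode_unfold c) as Hdec.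
  destruct (c mod 6) as [|[|[|[|[|k]]]]] eqn:Em; rewrite Hdec;
    [rewrite J; constructor | rewrite J, lhd_ldecode; constructor |
     rewrite J, lnth_ldecode; constructor | ..];
    destruct (subcodes_lt c ltac:(congruence)) as (Q & Q1 & Q2).
  - destruct J as [HX [Hargs Hf]].
    apply evals_Comp with (vs := ldecode X); [|apply IHc; auto; lia].
    apply evals_list_nth; [unfold llength in HX; lia|]. intros i Hi.
    rewrite <- !lnth_ldecode. apply IHc; [|apply Hargs; unfold llength in *; lia].
    pose proof (ldecode_lt (unpair2 (c / 6)) (nth i (ldecode (unpair2 (c / 6))) 0)
                  (nth_In _ _ Hi)).
    rewrite lnth_ldecode. lia.
  - destruct (lhd A) as [|m] eqn:Eh.
    + apply evals_Prim0; [now rewrite <- lhd_ldecode|].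
      rewrite <- ltl_ldecode. apply IHc; auto; lia.
    + destruct J as [Hrec Hstep]. eapply evals_PrimS with (r := X) (m := m).
      * now rewrite <- lhd_ldecode.
      * rewrite <- ltl_ldecode, <- lcons_ldecode, <- Hdec.
        apply IHh; [|exact Hrec]. unfold lhd, lcons. simpl. rewrite unpair1_pair. lia.
      * rewrite <- ltl_ldecode, <- !lcons_ldecode. apply IHc; auto; lia.
  - destruct J as [Hzero Hbelow]. constructor. apply evals_search_intro; [lia| |].
    + rewrite <- lcons_ldecode. apply IHc; auto; lia.
    + intros y Hy. destruct (Hbelow y ltac:(lia)) as [e [He [E1 [E2 E3]]]].
      destruct (entry_val e) as [|w] eqn:Ew; [congruence|]. exists w.
      rewrite <- lcons_ldecode, <- E2, <- Ew. apply IHc; [lia|]. exists e. auto.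
Qed.

Lemma valid_cert_sound c A v : derives D c A v -> evals (decode c) (ldecode A) v.
Proof.
  revert A v. induction c as [c IHc] using (well_founded_induction lt_wf). intros A.
  remember (lhd A) as h eqn:Eh. revert A Eh.
  induction h as [h IHh] using (well_founded_induction lt_wf).
  intros A Eh v [e [He [E1 [E2 E3]]]]. subst c A v.
  apply (justified_sound _ _ _ (entry_aux e)); [| |now apply HD].
  - intros c' A' v' Hc'. now apply IHc.
  - intros A' v' Hh'. apply (IHh (lhd A')); auto; lia.
Qed.

End Soundness.

Definition certified c A v := exists D, valid_cert D /\ derives D c A v.

Lemma certify D c A v X : valid_cert D -> justified D c A v X -> certified c A v.
Proof.
  intros HD J. assert (I : incl D (entry c A v X :: D)) by apply incl_tl, incl_refl.
  exists (entry c A v X :: D). split.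
  - intros e [<-|He].
    + rewrite entry_prog_entry, entry_args_entry, entry_val_entry, entry_aux_entry.
      exact (justified_incl _ _ _ _ _ _ I J).
    + exact (justified_incl _ _ _ _ _ _ I (HD e He)).
  - exists (entry c A v X).
    rewrite entry_prog_entry, entry_args_entry, entry_val_entry. simpl; auto.
Qed.

Definition certified_list G A vs := exists D, valid_cert D /\ length vs = llength G /\
  forall i, i < llength G -> derives D (lnth i G) A (nth i vs 0).

Definition certified_search q a y v := exists D, valid_cert D /\
  derives D q (lcode (v :: a)) 0 /\
  forall y', y <= y' < v -> derives_nonzero D q (lcode (y' :: a)).

Lemma certified_list_cons w A v vs :
  certified (unpair1 w) A v -> certified_list (unpair2 w) A vs ->
  certified_list (S w) A (v :: vs).
Proof.
  intros [D1 [V1 H1]] [D2 [V2 [L2 H2]]]. exists (D1 ++ D2). unfold llength in *.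
  split; [now apply valid_cert_app|]. rewrite ldecode_S. split; [simpl; auto|].
  intros [|i] Hi; rewrite lnth_ldecode, ldecode_S; simpl.
  - now apply derives_app_l.
  - rewrite <- lnth_ldecode. apply derives_app_r, H2. simpl in Hi. lia.
Qed.

Lemma certified_search_next q a y w v :
  certified q (lcode (y :: a)) (S w) -> certified_search q a (S y) v ->
  certified_search q a y v.
Proof.
  intros [D1 [V1 H1]] [D2 [V2 [H2 H3]]].
  exists (D1 ++ D2). split; [now apply valid_cert_app|]. split.
  - now apply derives_app_r.
  - intros y' Hy'. destruct (Nat.eq_dec y y') as [<-|Hne].
    + destruct H1 as [e [He [Q1 [Q2 Q3]]]]. exists e.
      rewrite Q3. repeat split; auto using in_or_app.
    + eapply derives_nonzero_incl; [apply incl_appr, incl_refl|]. apply H3; lia.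
Qed.

Lemma evals_certified_mut :
  (forall p a v, evals p a v -> forall c, decode c = p -> certified c (lcode a) v) /\
  (forall gs a vs, evals_list gs a vs -> forall G, map decode (ldecode G) = gs ->
     certified_list G (lcode a) vs) /\
  (forall f a y v, evals_search f a y v -> forall q, decode q = f -> certified_search q a y v).
Proof.
  apply evals_mutind.
  - intros a c E%decode_inv. apply (certify [] c (lcode a) 0 0 valid_cert_nil).
    unfold justified. now rewrite E.
  - intros a c E%decode_inv. apply (certify [] c (lcode a) _ 0 valid_cert_nil).
    unfold justified. now rewrite E, lhd_lcode.
  - intros i a c [E1 E2]%decode_inv. apply (certify [] c (lcode a) _ 0 valid_cert_nil).
    unfold justified. now rewrite E1, E2, lnth_lcode.
  - intros f gs a vs v _ IHgs _ IHf c [E1 [E2 E3]]%decode_inv.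
    destruct (IHgs _ E3) as [D1 [V1 [L1 H1]]]. destruct (IHf _ E2) as [D2 [V2 H2]].
    apply (certify (D1 ++ D2) c (lcode a) v (lcode vs)); [now apply valid_cert_app|].
    unfold justified. rewrite E1, llength_lcode. repeat split; auto using derives_app_r.
    intros i Hi. rewrite lnth_lcode. apply derives_app_l, H1. lia.
  - intros f g a v Eh _ IHf c [E1 [E2 E3]]%decode_inv.
    destruct (IHf _ E2) as [D1 [V1 H1]].
    apply (certify D1 c (lcode a) v 0 V1).
    unfold justified. rewrite E1, lhd_lcode, Eh, ltl_lcode. exact H1.
  - intros f g a m r v Eh _ IHrec _ IHg c E.
    destruct (IHrec c E) as [D1 [V1 H1]]. apply decode_inv in E as [E1 [E2 E3]].
    destruct (IHg _ E3) as [D2 [V2 H2]].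
    apply (certify (D1 ++ D2) c (lcode a) v r); [now apply valid_cert_app|].
    unfold justified. rewrite E1, lhd_lcode, Eh, ltl_lcode, !lcons_lcode.
    split; [apply derives_app_l | apply derives_app_r]; assumption.
  - intros f a v _ IHs c [E1 E2]%decode_inv.
    destruct (IHs _ E2) as [D1 [V1 [H1 H2]]].
    apply (certify D1 c (lcode a) v 0 V1).
    unfold justified. rewrite E1, !lcons_lcode. split; auto.
    intros y Hy. rewrite lcons_lcode. apply H2; lia.
  - intros a G E.
    assert (L : llength G = 0) by (unfold llength; now rewrite <- (length_map decode), E).
    exists []. rewrite L. repeat split; auto using valid_cert_nil. intros; lia.
  - intros g gs a v vs _ IHg _ IHgs [|w] E; [discriminate|].
    rewrite ldecode_S in E. injection E as E1 E2. now apply certified_list_cons; auto.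
  - intros f a y _ IH q E. destruct (IH _ E) as [D [V H]]. exists D. repeat split; auto.
    intros; lia.
  - intros f a y w v _ IHy _ IHs q E. eapply certified_search_next; eauto.
Qed.

Lemma W_iff_certified m z : W m z <-> exists v, certified m (lcode [z]) v.
Proof.
  unfold W. split.
  - intros [v Hv%evals_iff_converges]. exists v.
    exact (proj1 evals_certified_mut _ _ _ Hv m eq_refl).
  - intros [v [D [HD Hd]]]. exists v. apply evals_iff_converges.
    rewrite <- (ldecode_lcode [z]). exact (valid_cert_sound D HD _ _ _ Hd).
Qed.

(** * Kleene's T predicate *)

Definition derivesz D c A v :=
  zexists_in (fun e p => zand (zeq (entry_prog e) (lnth 0 p))
                          (zand (zeq (entry_args e) (lnth 1 p)) (zeq (entry_val e) (lnth 2 p))))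
    D (lcode [c; A; v]).

Definition derives_nonzeroz D c A :=
  zexists_in (fun e p => zand (zeq (entry_prog e) (lnth 0 p))
                          (zand (zeq (entry_args e) (lnth 1 p)) (znot (entry_val e))))
    D (lcode [c; A]).

Lemma derivesz_spec D c A v : derivesz (lcode D) c A v = 0 <-> derives D c A v.
Proof.
  unfold derivesz, derives. rewrite zexists_in_spec, !lnth_lcode. cbn [nth].
  repeat setoid_rewrite zand_spec. repeat setoid_rewrite zeq_spec. reflexivity.
Qed.

Lemma derives_nonzeroz_spec D c A :
  derives_nonzeroz (lcode D) c A = 0 <-> derives_nonzero D c A.
Proof.
  unfold derives_nonzeroz, derives_nonzero. rewrite zexists_in_spec, !lnth_lcode. cbn [nth].
  repeat setoid_rewrite zand_spec. repeat setoid_rewrite zeq_spec.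
  setoid_rewrite znot_spec. reflexivity.
Qed.

Lemma recursive_derivesz : recursive4 derivesz.
Proof. unfold derivesz. recursive_tac. Qed.
Lemma recursive_derives_nonzeroz : recursive3 derives_nonzeroz.
Proof. unfold derives_nonzeroz. recursive_tac. Qed.
#[export] Hint Resolve recursive_derivesz recursive_derives_nonzeroz : recursive.

Definition comp_argsz D G A X :=
  zforall_below (fun i p => derivesz (lnth 0 p) (lnth i (lnth 1 p)) (lnth 2 p) (lnth i (lnth 3 p)))
    (llength X) (lcode [D; G; A; X]).

Definition search_belowz D q A v :=
  zforall_below (fun y p => derives_nonzeroz (lnth 0 p) (lnth 1 p) (lcons y (lnth 2 p)))
    v (lcode [D; q; A]).

Definition justifiedz D c A v X :=
  ifz (zeq (c mod 6) 0) (zeq v 0)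
  (ifz (zeq (c mod 6) 1) (zeq v (S (lhd A)))
  (ifz (zeq (c mod 6) 2) (zeq v (lnth (c / 6) A))
  (ifz (zeq (c mod 6) 3)
     (zand (zeq (llength X) (llength (unpair2 (c / 6))))
        (zand (comp_argsz D (unpair2 (c / 6)) A X) (derivesz D (unpair1 (c / 6)) X v)))
  (ifz (zeq (c mod 6) 4)
     (ifz (lhd A) (derivesz D (unpair1 (c / 6)) (ltl A) v)
        (zand (derivesz D c (lcons (pred (lhd A)) (ltl A)) X)
              (derivesz D (unpair2 (c / 6)) (lcons (pred (lhd A)) (lcons X (ltl A))) v)))
  (zand (derivesz D (c / 6) (lcons v A) 0) (search_belowz D (c / 6) A v)))))).

Definition validz D :=
  zforall_in (fun e D' => justifiedz D' (entry_prog e) (entry_args e) (entry_val e) (entry_aux e))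
    D D.

Definition kleene_T m z D :=
  zand (validz D)
    (zexists_in (fun e p => zand (zeq (entry_prog e) (lnth 0 p))
                                 (zeq (entry_args e) (lcons (lnth 1 p) 0)))
       D (lcode [m; z])).

Lemma comp_argsz_spec D G A X : comp_argsz (lcode D) G A X = 0 <->
  forall i, i < llength X -> derives D (lnth i G) A (lnth i X).
Proof.
  unfold comp_argsz. rewrite zforall_below_spec, !lnth_lcode. cbn [nth].
  now setoid_rewrite derivesz_spec.
Qed.

Lemma search_belowz_spec D q A v : search_belowz (lcode D) q A v = 0 <->
  forall y, y < v -> derives_nonzero D q (lcons y A).
Proof.
  unfold search_belowz. rewrite zforall_below_spec, !lnth_lcode. cbn [nth].
  now setoid_rewrite derives_nonzeroz_spec.
Qed.

Lemma justifiedz_spec D c A v X : justifiedz (lcode D) c A v X = 0 <-> justified D c A v X.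
Proof.
  unfold justifiedz, justified. assert (c mod 6 < 6) by (apply Nat.mod_upper_bound; lia).
  destruct (c mod 6) as [|[|[|[|[|[|k]]]]]]; cbn [ifz zeq Nat.sub Nat.add]; try lia.
  1-3: apply zeq_spec.
  - now rewrite !zand_spec, zeq_spec, comp_argsz_spec, derivesz_spec.
  - destruct (lhd A); cbn [ifz pred]; now rewrite ?zand_spec, !derivesz_spec.
  - now rewrite zand_spec, derivesz_spec, search_belowz_spec.
Qed.

Lemma validz_spec D : validz (lcode D) = 0 <-> valid_cert D.
Proof.
  unfold validz, valid_cert. rewrite zforall_in_spec. now setoid_rewrite justifiedz_spec.
Qed.

Lemma kleene_T_spec m z D : kleene_T m z (lcode D) = 0 <->
  valid_cert D /\ exists e, In e D /\ entry_prog e = m /\ entry_args e = lcode [z].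
Proof.
  unfold kleene_T. rewrite zand_spec, validz_spec, zexists_in_spec, !lnth_lcode. cbn [nth].
  repeat setoid_rewrite zand_spec. repeat setoid_rewrite zeq_spec. reflexivity.
Qed.

Lemma recursive_comp_argsz : recursive4 comp_argsz.
Proof. unfold comp_argsz. recursive_tac. Qed.
Lemma recursive_search_belowz : recursive4 search_belowz.
Proof. unfold search_belowz. recursive_tac. Qed.
#[export] Hint Resolve recursive_comp_argsz recursive_search_belowz : recursive.

Lemma recursive_justifiedz : recursive5 justifiedz.
Proof. unfold justifiedz. recursive_tac. Qed.
#[export] Hint Resolve recursive_justifiedz : recursive.

Lemma recursive_kleene_T : recursive3 kleene_T.
Proof. unfold kleene_T, validz. recursive_tac. Qed.
#[export] Hint Resolve recursive_kleene_T : recursive.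

Theorem W_iff_kleene_T m z : W m z <-> exists D, kleene_T m z D = 0.
Proof.
  rewrite W_iff_certified. split.
  - intros [v [D [HD [e [He [E1 [E2 _]]]]]]]. exists (lcode D).
    apply kleene_T_spec. eauto.
  - intros [D HT]. rewrite <- (lcode_ldecode D), kleene_T_spec in HT.
    destruct HT as [HD [e [He [E1 E2]]]]. exists (entry_val e), (ldecode D).
    split; [exact HD|]. exists e. auto.
Qed.

(** * Interpolability is in Pi^0_2 *)

Lemma computable_fun_recursive1 f : computable_fun f -> recursive1 f.
Proof.
  intros [p Hp]. exists (Comp p [Proj 0]). intros a.
  apply evals_Comp with (vs := [nth 0 a 0]); [repeat constructor|].
  apply evals_iff_converges, Hp.
Qed.

Lemma recursive1_computable_fun f : recursive1 f -> computable_fun f.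
Proof. intros [p Hp]. exists p. intros x. apply evals_iff_converges, (Hp [x]). Qed.

Lemma recursive3_computable_rel3 f : recursive3 f ->
  (forall n x y, f n x y = 0 \/ f n x y = 1) -> computable_rel3 (fun n x y => f n x y = 0).
Proof.
  intros [p Hp] H01. exists p. intros n x y. pose proof (Hp [n; x; y]) as Hf. cbn [nth] in Hf.
  split; intros E; apply evals_iff_converges.
  - now rewrite <- E.
  - destruct (H01 n x y) as [E'|E']; [contradiction|]. now rewrite <- E'.
Qed.

(* For [X = [y; a; b; u1; u2]] and [Y = [x; u; c; u3; u4; u5]]: some [x] lies below
   [y] (witness [u]), and unless [a] or [b] fails to lie below [y] (witnesses [u1],
   [u2]), some [c] below [y] lies above both (witnesses [u3], [u4], [u5]). *)
Definition directedz (q : nat -> nat -> nat -> nat) X Y :=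
  zand (q (lnth 0 Y) (lnth 0 X) (lnth 1 Y))
   (zor (znot (q (lnth 1 X) (lnth 0 X) (lnth 3 X)))
    (zor (znot (q (lnth 2 X) (lnth 0 X) (lnth 4 X)))
     (zand (q (lnth 2 Y) (lnth 0 X) (lnth 3 Y))
      (zand (q (lnth 1 X) (lnth 2 Y) (lnth 4 Y)) (q (lnth 2 X) (lnth 2 Y) (lnth 5 Y)))))).

Lemma directed_iff_forall_exists (R : nat -> nat -> Prop) q :
  (forall i j, R i j <-> exists u, q i j u = 0) ->
  (forall y, directed_below R y) <-> forall X, exists Y, directedz q X Y = 0.
Proof.
  intros HR. unfold directedz. split.
  - intros HD X. destruct (HD (lnth 0 X)) as [[x [u Hu]%HR] Hdir].
    destruct (Nat.eq_dec (q (lnth 1 X) (lnth 0 X) (lnth 3 X)) 0) as [Ha|Ha];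
      [destruct (Nat.eq_dec (q (lnth 2 X) (lnth 0 X) (lnth 4 X)) 0) as [Hb|Hb]|].
    + assert (Ra : R (lnth 1 X) (lnth 0 X)) by (apply HR; eauto).
      assert (Rb : R (lnth 2 X) (lnth 0 X)) by (apply HR; eauto).
      destruct (Hdir _ _ Ra Rb) as [c [[u3 H3]%HR [[u4 H4]%HR [u5 H5]%HR]]].
      exists (lcode [x; u; c; u3; u4; u5]). rewrite !lnth_lcode; cbn [nth].
      rewrite !zand_spec, !zor_spec, !zand_spec. tauto.
    + exists (lcode [x; u]). rewrite !lnth_lcode; cbn [nth].
      rewrite zand_spec, !zor_spec, !znot_spec. tauto.
    + exists (lcode [x; u]). rewrite !lnth_lcode; cbn [nth].
      rewrite zand_spec, !zor_spec, !znot_spec. tauto.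
  - intros H y. split.
    + destruct (H (lcode [y])) as [Y [HY _]%zand_spec]. rewrite lnth_lcode in HY.
      exists (lnth 0 Y). apply HR. eauto.
    + intros a b [u1 Ha]%HR [u2 Hb]%HR.
      destruct (H (lcode [y; a; b; u1; u2])) as [Y HY]. rewrite !lnth_lcode in HY; cbn [nth] in HY.
      rewrite zand_spec, !zor_spec, !znot_spec, !zand_spec in HY.
      destruct HY as [_ [?|[?|[H3 [H4 H5]]]]]; try contradiction.
      exists (lnth 2 Y). repeat split; apply HR; eauto.
Qed.

Lemma interpolable_closure_pi02 t : recursive1 t ->
  (forall n i j, V (t n) i j <-> clos_trans nat (V n) i j) ->
  Pi02 (fun n => interpolable (V (t n))).
Proof.
  intros Ht HT.
  exists (fun n X Y => directedz (fun i j u => kleene_T (t n) (pair i j) u) X Y = 0). split.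
  - apply recursive3_computable_rel3; [unfold directedz; recursive_tac|].
    intros. apply zand_01.
  - intros n.
    rewrite <- (directed_iff_forall_exists (V (t n))) by (intros i j; apply W_iff_kleene_T).
    unfold interpolable. enough (transitive nat (V (t n))) by tauto.
    intros i j k Hij Hjk. apply HT. apply HT in Hij, Hjk. eapply t_trans; eauto.
Qed.

(** * Pi^0_2-hardness *)

Lemma interpolable_ext (R S : nat -> nat -> Prop) :
  (forall i j, R i j <-> S i j) -> interpolable R <-> interpolable S.
Proof.
  intros E. unfold interpolable, transitive, directed_below.
  setoid_rewrite E. reflexivity.
Qed.

Definition reduction_rel (P : nat -> Prop) i j : Prop :=
  (i = j /\ Nat.Odd i) \/ (i = 1 /\ exists x, j = 2 * x /\ P x).

Lemma reduction_rel_trans P : transitive nat (reduction_rel P).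
Proof.
  intros i j k [[<- _]|[-> [x [-> _]]]] Hjk; [exact Hjk|].
  destruct Hjk as [[_ [m Hm]]|[E _]]; lia.
Qed.

(* Every initial segment has at most one element, so it is directed iff it is nonempty;
   that of [2 x] is nonempty iff [P x]. *)
Lemma interpolable_reduction_rel P : interpolable (reduction_rel P) <-> forall x, P x.
Proof.
  split.
  - intros [_ HD] x. destruct (HD (2 * x)) as [[w [[E [m Hm]]|[_ [x' [E Hx']]]]] _]; [lia|].
    now replace x with x' by lia.
  - intros HP. split; [apply reduction_rel_trans|]. intros z.
    destruct (Nat.Even_or_Odd z) as [[x ->]|Hz].
    + assert (below : forall a, reduction_rel P a (2 * x) -> a = 1).
      { intros a [[E [m Hm]]|[-> _]]; [lia|auto]. }
      assert (reduction_rel P 1 (2 * x)) by (right; eauto).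
      assert (reduction_rel P 1 1) by (left; split; [|exists 0]; lia).
      split; [eauto|]. intros a b Ha Hb. rewrite (below a Ha), (below b Hb). eauto.
    + assert (below : forall a, reduction_rel P a z -> a = z).
      { intros a [[<- _]|[-> [x [-> _]]]]; [auto|]. destruct Hz as [m Hm]. lia. }
      assert (reduction_rel P z z) by (left; auto).
      split; [eauto|]. intros a b Ha Hb. rewrite (below a Ha), (below b Hb). eauto.
Qed.

Lemma evals_Mu_halts f (h : list nat -> nat) a :
  (forall b, evals f b (h b)) -> (exists v, evals (Mu f) a v) <-> exists y, h (y :: a) = 0.
Proof.
  intros Hh. split.
  - intros [v Hv]. inversion Hv as [| | | | | |f' a' v' Hs]; subst. exists v.
    assert (Hfound : forall y, evals_search f a y v -> h (v :: a) = 0).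
    { intros y Hy. induction Hy; auto. apply (evals_det f (y :: a)); auto. }
    eauto.
  - intros [y Hy].
    enough (exists v, evals_search f a 0 v) as [v Hv] by (exists v; now constructor).
    destruct (first_zero_spec (fun y' => h (y' :: a)) y) as [H1 [H2 H3]].
    exists (first_zero (fun y' => h (y' :: a)) y). apply (evals_search_total f h); auto; [lia| |].
    + destruct (Nat.eq_dec (first_zero (fun y' => h (y' :: a)) y) y) as [->|]; auto.
      apply H2; lia.
    + intros y' Hy'. apply H3. lia.
Qed.

Fixpoint const_prog (n : nat) : prog :=
  match n with 0 => Zero | S m => Comp Succ [const_prog m] end.

Lemma evals_const_prog n a : evals (const_prog n) a n.
Proof.
  induction n as [|n IH]; [constructor|].
  apply evals_Comp with (vs := [n]); [repeat constructor; exact IH | apply evals_Succ].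
Qed.

Definition const_code n := encode (const_prog n).

Lemma recursive_const_code : recursive1 const_code.
Proof.
  eapply recursive_ext; [|apply (recursive_prim (fun _ => 0)
                          (fun a => 6 * pair 1 (lcons (nth 1 a 0) 0) + 3)); recursive_tac].
  intros [|m xs]; [reflexivity|]. cbn [hd tl nth].
  induction m as [|m IH]; [reflexivity|]. cbn [prim_rec nth]. rewrite IH. reflexivity.
Qed.
#[export] Hint Resolve recursive_const_code : recursive.

(* [param_search h n] maps [z] to the least [y] with [h [y; n; z] = 0]. *)
Definition param_search (h : prog) (n : nat) : prog := Comp (Mu h) [const_prog n; Proj 0].

Lemma W_param_search h H n z :
  (forall a, evals h a (H (nth 0 a 0) (nth 1 a 0) (nth 2 a 0))) ->
  W (encode (param_search h n)) z <-> exists y, H y n z = 0.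
Proof.
  intros Hh. unfold W. rewrite decode_encode.
  rewrite <- (evals_Mu_halts h (fun a => H (nth 0 a 0) (nth 1 a 0) (nth 2 a 0)) [n; z] Hh).
  split; intros [v Hv]; exists v.
  - apply evals_iff_converges in Hv.
    inversion Hv as [| | |f gs a vs v' Hargs Hmu| | |]; subst.
    inversion Hargs as [|g gs a' v1 vs1 Hn Hrest]; subst.
    inversion Hrest as [|g gs a'' v2 vs2 Hz Hnil]; subst.
    inversion Hnil; subst. inversion Hz; subst.
    now rewrite (evals_det _ _ _ _ Hn (evals_const_prog n [z])) in Hmu.
  - apply evals_iff_converges. apply evals_Comp with (vs := [n; z]); [|exact Hv].
    repeat constructor. apply evals_const_prog.
Qed.

Lemma recursive_encode_param_search h : recursive1 (fun n => encode (param_search h n)).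
Proof.
  eapply recursive_ext
    with (f := fun a => 6 * pair (encode (Mu h)) (lcode [const_code (nth 0 a 0); 2]) + 3);
    [reflexivity | recursive_tac].
Qed.

(* Excluded middle only serves to name the function computed by the decision program. *)
Lemma computable_rel3_char R : computable_rel3 R ->
  exists chi, recursive3 chi /\ forall n x y, chi n x y = 0 <-> R n x y.
Proof.
  intros [p Hp].
  exists (fun n x y => if excluded_middle_informative (R n x y) then 0 else 1). split.
  - exists (Comp p [Proj 0; Proj 1; Proj 2]). intros a.
    apply evals_Comp with (vs := [nth 0 a 0; nth 1 a 0; nth 2 a 0]); [repeat constructor|].
    apply evals_iff_converges.
    destruct (excluded_middle_informative _) as [H|H]; now apply Hp.
  - intros n x y. destruct (excluded_middle_informative (R n x y)); intuition congruence.
Qed.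

Definition reduction_testz (chi : nat -> nat -> nat -> nat) y n z :=
  zor (zand (zeq (unpair1 z) (unpair2 z)) (zeq (unpair1 z) (S (2 * (unpair1 z / 2)))))
      (zand (zeq (unpair1 z) 1)
         (zand (zeq (unpair2 z) (2 * (unpair2 z / 2))) (chi n (unpair2 z / 2) y))).

Lemma half_double k : 2 * k / 2 = k.
Proof. rewrite Nat.mul_comm. now apply Nat.div_mul. Qed.

Lemma half_double_succ k : S (2 * k) / 2 = k.
Proof. symmetry. apply (Nat.div_unique _ _ _ 1); lia. Qed.

Lemma reduction_testz_spec chi R n i j :
  (forall x y, chi n x y = 0 <-> R x y) ->
  (exists y, reduction_testz chi y n (pair i j) = 0) <->
  reduction_rel (fun x => exists y, R x y) i j.
Proof.
  intros Hchi. unfold reduction_testz, reduction_rel.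
  rewrite unpair1_pair, unpair2_pair. split.
  - intros [y Hy]. rewrite zor_spec, !zand_spec, !zeq_spec, Hchi in Hy.
    destruct Hy as [[-> E]|[-> [E Hy]]].
    + left. split; [reflexivity|]. exists (j / 2). lia.
    + right. split; [reflexivity|]. exists (j / 2). eauto.
  - intros [[<- [k ->]]|[-> [x [-> [y Hy]]]]].
    + exists 0. rewrite zor_spec, !zand_spec, !zeq_spec. left. split; [reflexivity|].
      rewrite Nat.add_1_r, half_double_succ. reflexivity.
    + exists y. rewrite zor_spec, !zand_spec, !zeq_spec, Hchi, half_double. tauto.
Qed.

Lemma pi02_reduces_to_interpolable B : Pi02 B ->
  exists f, computable_fun f /\
    forall n, (B n <-> interpolable (V (f n))) /\ transitive nat (V (f n)).
Proof.
  intros [R [HR HB]]. destruct (computable_rel3_char R HR) as [chi [Hrec Hchi]].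
  assert (Htest : recursive3 (reduction_testz chi)) by (unfold reduction_testz; recursive_tac).
  destruct Htest as [h Hh].
  exists (fun n => encode (param_search h n)).
  split; [apply recursive1_computable_fun, recursive_encode_param_search|]. intros n.
  assert (HV : forall i j, V (encode (param_search h n)) i j <->
                           reduction_rel (fun x => exists y, R n x y) i j).
  { intros i j. unfold V. rewrite (W_param_search h (reduction_testz chi)) by apply Hh.
    now apply reduction_testz_spec. }
  split.
  - rewrite HB, <- interpolable_reduction_rel. apply interpolable_ext. intros i j.
    symmetry. apply HV.
  - intros i j k Hij Hjk. apply HV. apply HV in Hij, Hjk. eapply reduction_rel_trans; eauto.
Qed.

Lemma clos_trans_of_transitive (R : nat -> nat -> Prop) i j :
  transitive nat R -> clos_trans nat R i j <-> R i j.
Proof.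
  intros HR. split; [|apply t_step]. induction 1; eauto.
Qed.

Theorem proposition18 :
  forall t : nat -> nat,
    computable_fun t ->
    (forall n i j, V (t n) i j <-> clos_trans nat (V n) i j) ->
    Pi02_complete (fun n => interpolable (V (t n))).
Proof.
  intros t Ht HT. split.
  - exact (interpolable_closure_pi02 t (computable_fun_recursive1 t Ht) HT).
  - intros B HB. destruct (pi02_reduces_to_interpolable B HB) as [f [Hf Hred]].
    exists f. split; [exact Hf|]. intros n. destruct (Hred n) as [HBn Htrans].
    rewrite HBn. apply interpolable_ext. intros i j.
    now rewrite HT, clos_trans_of_transitive.
Qed.
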